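(* Let $\rho_{ABE}=\sum_ap_A(a)|a\rangle\langle a|\otimes\rho^{|a}_{BE}$ be a state with $A$ and $B$ classical, and let $\rho_E=\mathrm{tr}_{AB}[\rho_{ABE}]=\sum_ap_A(a)\rho^{|a}_E$ with $\rho^{|a}_E=\mathrm{tr}_B[\rho^{|a}_{BE}]$. Then for all $a$ with $p_A(a)>0$ and all $\alpha\in[1,\infty]$, $$2^{(\alpha-1)D_\alpha(\rho^{|a}_{BE}\|I_B\otimes\rho_E)}\le p_A(a)^{1-\alpha}.$$
   Context: $\log$ base 2. For $\alpha\in(1,\infty)$, $D_\alpha(\rho\|\sigma)=\frac{1}{\alpha-1}\log\big(\mathrm{tr}[(\sigma^{\frac{1-\alpha}{2\alpha}}\rho\sigma^{\frac{1-\alpha}{2\alpha}})^\alpha]/\mathrm{tr}\rho\big)$ if $\mathrm{supp}\rho\subseteq\mathrm{supp}\sigma$, else $+\infty$; $D_1$ is the Umegaki relative entropy $\mathrm{tr}[\rho(\log\rho-\log\sigma)]$ and $D_\infty(\rho\|\sigma)=\inf\{\lambda:\rho\le2^\lambda\sigma\}$ is the max-divergence. *)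

From HB Require Import structures.
From mathcomp Require Import all_boot all_order all_algebra.
From mathcomp Require Import all_classical all_reals all_analysis.
From mathcomp Require Import complex.
From mathcomp Require mxtens.

Set Implicit Arguments.
Unset Strict Implicit.
Unset Printing Implicit Defensive.

Import Order.TTheory GRing.Theory Num.Theory.
Local Open Scope ring_scope.

Definition log2 {R : realType} (x : R) : R := ln x / ln 2.

Definition exp2e {R : realType} (x : \bar R) : \bar R :=
  match x with
  | r%:E => (2 `^ r)%:E
  | +oo%E => +oo%E
  | -oo%E => 0%:E
  end.

Definition adjmx {R : realType} {m n : nat} (M : 'M[R[i]]_(m, n)) : 'M[R[i]]_(n, m) :=
  (map_mx Num.conj M)^T.

Definition psd {R : realType} {n : nat} (M : 'M[R[i]]_n) : Prop :=
  M = adjmx M /\ forall v : 'rV[R[i]]_n, 0 <= (v *m M *m adjmx v) 0 0.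

Definition density {R : realType} {n : nat} (M : 'M[R[i]]_n) : Prop :=
  psd M /\ \tr M = 1.

Definition loewner_le {R : realType} {n : nat} (A B : 'M[R[i]]_n) : Prop :=
  psd (B - A).

Definition mxfun {R : realType} {n : nat} (f : R -> R) (M : 'M[R[i]]_n) : 'M[R[i]]_n :=
  invmx (spectralmx M) *m
    diag_mx (map_mx (fun z : R[i] => ((f (complex.Re z))%:C)%C) (spectral_diag M))
  *m spectralmx M.

(* generalized power M^s of a PSD matrix (taken on the support, 0 on the kernel) *)
Definition mxpow {R : realType} {n : nat} (M : 'M[R[i]]_n) (s : R) : 'M[R[i]]_n :=
  mxfun (fun x => if x <= 0 then 0 else x `^ s) M.

Definition mxlog2 {R : realType} {n : nat} (M : 'M[R[i]]_n) : 'M[R[i]]_n :=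
  mxfun (fun x => if x <= 0 then 0 else log2 x) M.

(* supp rho \subseteq supp sigma (for Hermitian matrices the support is the
   row space) *)
Definition supp_sub {R : realType} {n : nat} (rho sigma : 'M[R[i]]_n) : bool :=
  (rho <= sigma)%MS.

Definition D_sand {R : realType} {n : nat} (alpha : R) (rho sigma : 'M[R[i]]_n) : \bar R :=
  if supp_sub rho sigma then
    let s := (1 - alpha) / (2 * alpha) in
    ((alpha - 1)^-1 *
       log2 (complex.Re (\tr (mxpow (mxpow sigma s *m rho *m mxpow sigma s) alpha))
             / complex.Re (\tr rho)))%:E
  else +oo%E.

Definition D_umegaki {R : realType} {n : nat} (rho sigma : 'M[R[i]]_n) : \bar R :=
  if supp_sub rho sigma then
    (complex.Re (\tr (rho *m (mxlog2 rho - mxlog2 sigma))))%:E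
  else +oo%E.

Definition D_alpha {R : realType} {n : nat} (alpha : R) (rho sigma : 'M[R[i]]_n) : \bar R :=
  if alpha == 1 then D_umegaki rho sigma else D_sand alpha rho sigma.

Definition D_max {R : realType} {n : nat} (rho sigma : 'M[R[i]]_n) : \bar R :=
  ereal_inf [set (l%:E) | l in [set l : R | loewner_le rho (((2 `^ l)%:C)%C *: sigma)]].

Definition tens {R : realType} {m n : nat} (X : 'M[R[i]]_m) (Y : 'M[R[i]]_n)
  : 'M[R[i]]_(m * n) := mxtens.tensmx X Y.

Definition ptrace1 {R : realType} {nB nE : nat} (M : 'M[R[i]]_(nB * nE)) : 'M[R[i]]_nE :=
  \matrix_(i, j) \sum_(b < nB) M (mxtens.mxtens_index (b, i)) (mxtens.mxtens_index (b, j)).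

Definition classical_B {R : realType} {nB nE : nat} (M : 'M[R[i]]_(nB * nE)) : Prop :=
  exists omega : 'I_nB -> 'M[R[i]]_nE,
    M = \sum_(b < nB) tens (delta_mx b b) (omega b).

Definition rhoE {R : realType} {A : finType} {nB nE : nat}
  (p : A -> R) (rhoBE : A -> 'M[R[i]]_(nB * nE)) : 'M[R[i]]_nE :=
  \sum_(a : A) ((p a)%:C)%C *: ptrace1 (rhoBE a).

(* Put sigma = I_B (x) rho_E and c = 1 / p_A(a).  Being classical on B, rho^{|a}_BE
   is dominated by I_B (x) rho^{|a}_E, hence rho^{|a}_BE <= c sigma, which gives the
   bound on D_oo at once.  For 1 < alpha the claim reduces to
   tr[(S rho S)^alpha] <= c^(alpha-1) tr rho with S = sigma^((1-alpha)/(2 alpha)),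
   proved one eigenvector p (eigenvalue e > 0) of X = S rho S at a time.  Put
   t = p S rho.  Cauchy-Schwarz for rho together with rho <= c sigma gives
   t sigma^-1 t^* <= c e; read in the eigenbasis of sigma this makes Hoelder's
   (Young's) inequality yield e^alpha <= c^(alpha-1) |t|^2 / e.  Finally the rows
   p S rho^(1/2) / sqrt e are orthonormal, so Bessel's inequality bounds the sum of
   the |t|^2 / e by tr rho. *)

From HB Require Import structures.
From mathcomp Require Import all_boot all_order all_algebra.
From mathcomp Require Import all_classical all_reals all_analysis.
From mathcomp Require Import complex.
From mathcomp Require Import spectral sesquilinear.
From mathcomp Require Import ring lra.
From mathcomp Require mxtens.
Import Order.TTheory GRing.Theory Num.Theory.
Local Open Scope ring_scope.
Set Implicit Arguments.
Unset Strict Implicit.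
Unset Printing Implicit Defensive.
Section ScalarInequalities.
Variable R : realType.

Lemma young_powR (al y m : R) : 1 < al -> 0 <= y -> 0 < m ->
  al * (m `^ (al - 1) * y `^ al^-1) <= y + (al - 1) * m `^ al.
Proof.
move=> al1 y0 m0.
have al0 : 0 < al by lra.
have al1_neq0 : al - 1 != 0 by rewrite subr_eq0 gt_eqF.
have q0 : 0 < al / (al - 1) by rewrite divr_gt0 // subr_gt0.
have pq : al^-1 + (al / (al - 1))^-1 = 1.
  by rewrite invf_div -[X in X + _]mul1r -mulrDl addrC subrK mulfV // gt_eqF.
have := conjugate_powR (powR_ge0 y al^-1) (powR_ge0 m (al - 1)) al0 q0 pq.
rewrite -!powRrM mulVf ?gt_eqF // mulrCA mulfV // mulr1 powRr1 // => young.
rewrite [m `^ _ * _]mulrC; apply: le_trans (ler_wpM2l (ltW al0) young) _.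
by rewrite le_eqVlt; apply/orP; left; apply/eqP; field; rewrite al1_neq0 gt_eqF.
Qed.

Lemma sum_powR_le (I : finType) (al c : R) (b y : I -> R) :
  1 < al -> (forall i, 0 <= b i) -> (forall i, 0 <= y i) -> \sum_i b i <= c ->
  (\sum_i b i * y i `^ al^-1) `^ al <= c `^ (al - 1) * \sum_i b i * y i.
Proof.
move=> al1 b0 y0 sum_b_le.
set e := \sum_i _; set W := \sum_i b i.
have e0 : 0 <= e by apply: sumr_ge0 => i _; rewrite mulr_ge0 ?powR_ge0.
have [->|e_neq0] := eqVneq e 0.
  rewrite powR0 ?gt_eqF ?mulr_ge0 ?powR_ge0 ?sumr_ge0 // => [i _|]; last by lra.
  by rewrite mulr_ge0.
have e_gt0 : 0 < e by rewrite lt0r e_neq0.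
have W_gt0 : 0 < W.
  rewrite lt0r sumr_ge0 // andbT; apply: contraTneq e_gt0 => /eqP.
  rewrite psumr_eq0 => [/allP b_eq0|i _] //; rewrite /e big1 ?ltxx // => i _.
  by rewrite (eqP (b_eq0 i _)) ?mul0r ?mem_index_enum.
set mu := e / W.
have mu_gt0 : 0 < mu by rewrite divr_gt0.
have muW : mu * W = e by rewrite divfK ?gt_eqF.
have powRS x : 0 < x -> x `^ al = x `^ (al - 1) * x.
  move=> x_gt0; rewrite -[in LHS](subrK 1 al) (@powRD _ x (al - 1) 1).
    by rewrite powRr1 // ltW.
  by rewrite (gt_eqF x_gt0) implybT.
have young_sum : al * (mu `^ (al - 1) * e) <= \sum_i b i * y i + (al - 1) * mu `^ al * W.
  rewrite /e /W !mulr_sumr -big_split /=; apply: ler_sum => i _.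
  apply: le_trans (le_trans _ (ler_wpM2l (b0 i) (young_powR al1 (y0 i) mu_gt0))) _;
    by rewrite le_eqVlt; apply/orP; left; apply/eqP; ring.
have mu_e : mu `^ (al - 1) * e <= \sum_i b i * y i.
  have muWE : (al - 1) * mu `^ al * W = (al - 1) * (mu `^ (al - 1) * e).
    by rewrite powRS // -muW; ring.
  by rewrite muWE in young_sum; lra.
have e_le : e <= c * mu.
  by rewrite -muW mulrC ler_wpM2r // ltW.
rewrite powRS //; apply: le_trans (ler_wpM2l (powR_ge0 _ _) mu_e).
have c_gt0 : 0 < c := lt_le_trans W_gt0 sum_b_le.
rewrite mulrA ler_pM2r // -powRM; [|exact: ltW|exact: ltW].
by apply: ge0_ler_powR; rewrite ?nnegrE ?subr_ge0 ?mulr_ge0 ?invr_ge0 //; apply: ltW.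
Qed.

Definition ppowR (s x : R) : R := if x <= 0 then 0 else x `^ s.

Lemma ppowR_ge0 s x : 0 <= ppowR s x.
Proof. by rewrite /ppowR; case: ifP => // _; apply: powR_ge0. Qed.

Lemma ppowRD s t x : ppowR s x * ppowR t x = ppowR (s + t) x.
Proof.
rewrite /ppowR; case: leP => [_|x_gt0]; first by rewrite mul0r.
by rewrite powRD // (gt_eqF x_gt0) implybT.
Qed.

Lemma ppowR_mul_powR s t x : ppowR s x * x `^ t = ppowR (s + t) x.
Proof.
rewrite /ppowR; case: leP => [_|x_gt0]; first by rewrite mul0r.
by rewrite powRD // (gt_eqF x_gt0) implybT.
Qed.

Lemma ppowR0_le1 x : ppowR 0 x <= 1.
Proof. by rewrite /ppowR powRr0; case: ifP. Qed.

Lemma powR_le_ppowR_sum (I : finType) (al c e : R) (lam a : I -> R) :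
  1 < al -> 0 < e -> (forall i, 0 <= lam i) -> (forall i, 0 <= a i) ->
  e ^+ 2 = \sum_i ppowR (al^-1 - 1) (lam i) * a i ->
  \sum_i ppowR (-1) (lam i) * a i <= c * e ->
  e `^ al <= c `^ (al - 1) * (e^-1 * \sum_i a i).
Proof.
move=> al1 e_gt0 lam0 a0 e2 le_ce.
pose b i := ppowR (-1) (lam i) * a i / e.
have b0 i : 0 <= b i by rewrite divr_ge0 ?mulr_ge0 ?ppowR_ge0 // ltW.
have sum_b_le : \sum_i b i <= c by rewrite -mulr_suml ler_pdivrMr.
have eE : e = \sum_i b i * lam i `^ al^-1.
  rewrite -[LHS](mulfK (lt0r_neq0 e_gt0)) -expr2 e2 mulr_suml.
  by apply: eq_bigr => i _; rewrite /b (addrC al^-1) -ppowR_mul_powR; ring.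
have := sum_powR_le al1 b0 lam0 sum_b_le; rewrite -eE => /le_trans; apply.
rewrite ler_wpM2l ?powR_ge0 // mulr_sumr ler_sum // => i _.
rewrite /b (_ : _ * a i / e * lam i = ppowR (-1) (lam i) * lam i `^ 1 * (e^-1 * a i)).
  rewrite ppowR_mul_powR addNr ler_piMl ?ppowR0_le1 // mulr_ge0 ?invr_ge0 //.
  exact: ltW.
by rewrite powRr1 //; ring.
Qed.

End ScalarInequalities.

Local Notation "x %:C" := (real_complex _ x) (format "x %:C").

Section Adjoint.
Context {R : realType}.

Lemma adjmxE m n (A : 'M[R[i]]_(m, n)) : adjmx A = map_mx Num.conj A^T.
Proof. by rewrite /adjmx map_trmx. Qed.

Lemma adjmxK m n (A : 'M[R[i]]_(m, n)) : adjmx (adjmx A) = A.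
Proof. by apply/matrixP => i j; rewrite !mxE conjCK. Qed.

Lemma adjmxM m n p (A : 'M[R[i]]_(m, n)) (B : 'M[R[i]]_(n, p)) :
  adjmx (A *m B) = adjmx B *m adjmx A.
Proof. by rewrite /adjmx map_mxM trmx_mul. Qed.

Lemma adjmxD m n (A B : 'M[R[i]]_(m, n)) : adjmx (A + B) = adjmx A + adjmx B.
Proof. by rewrite /adjmx map_mxD linearD. Qed.

Lemma adjmxB m n (A B : 'M[R[i]]_(m, n)) : adjmx (A - B) = adjmx A - adjmx B.
Proof. by rewrite /adjmx map_mxB linearB. Qed.

Lemma adjmxZ m n (a : R[i]) (A : 'M[R[i]]_(m, n)) : adjmx (a *: A) = a^* *: adjmx A.
Proof. by apply/matrixP => i j; rewrite !mxE rmorphM. Qed.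

Lemma adjmx0 m n : adjmx (0 : 'M[R[i]]_(m, n)) = 0.
Proof. by rewrite /adjmx map_mx0 trmx0. Qed.

Lemma adjmx1 n : adjmx (1%:M : 'M[R[i]]_n) = 1%:M.
Proof. by rewrite /adjmx map_mx1 trmx1. Qed.

Lemma adjmx_diag n (d : 'rV[R[i]]_n) : adjmx (diag_mx d) = diag_mx (map_mx Num.conj d).
Proof.
apply/matrixP => i j; rewrite !mxE eq_sym.
by case: eqP => [->|_]; rewrite ?mulr1n ?mulr0n ?rmorph0.
Qed.

End Adjoint.

Section UnitaryDiag.
Context {R : realType}.

Definition sqnorm (z : R[i]) : R := complex.Re (z * z^*).

Lemma sqnorm_ge0 (z : R[i]) : 0 <= sqnorm z.
Proof. by case: z => a b; rewrite /sqnorm /=; nra. Qed.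

Lemma mul_conjC_sqnorm (z : R[i]) : z * z^* = (sqnorm z)%:C.
Proof. by case: z => a b; apply/eqP; rewrite eq_complex /= eqxx /=; apply/eqP; ring. Qed.

Lemma sqnorm_eq0 (z : R[i]) : sqnorm z = 0 -> z = 0.
Proof. by case: z => a b; rewrite /sqnorm /= => ab0; congr Complex; nra. Qed.

Lemma sqnorm_real (x : R) : sqnorm x%:C = x ^+ 2.
Proof. by rewrite /sqnorm /= oppr0 mulr0 subr0 expr2. Qed.

Lemma ge0_realC (z : R[i]) : 0 <= z -> z = (complex.Re z)%:C.
Proof. by case: z => a b; rewrite lecE /= => /andP[/eqP-> _]. Qed.

Lemma conjC_real_complex (x : R) : (x%:C)^* = x%:C.
Proof. exact: conjc_real. Qed.

Definition qform n (t : 'rV[R[i]]_n) (M : 'M[R[i]]_n) : R[i] := (t *m M *m adjmx t) 0 0.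

Lemma mxdiag_qform m n (A : 'M[R[i]]_(m, n)) (M : 'M[R[i]]_n) k :
  (A *m M *m adjmx A) k k = qform (row k A) M.
Proof. by rewrite /qform -row_mul !mxE; apply: eq_bigr => l _; rewrite !mxE. Qed.

Lemma qformZ n (a : R[i]) (t : 'rV[R[i]]_n) M : qform (a *: t) M = a * a^* * qform t M.
Proof. by rewrite /qform adjmxZ -!scalemxAl -scalemxAr !mxE mulrA. Qed.

Lemma qformBl n (t : 'rV[R[i]]_n) (M N : 'M[R[i]]_n) (c : R[i]) :
  qform t (c *: M - N) = c * qform t M - qform t N.
Proof. by rewrite /qform mulmxBr mulmxBl -scalemxAr -scalemxAl !mxE. Qed.

Definition unitary_diag n (U : 'M[R[i]]_n) (d : 'I_n -> R) : 'M[R[i]]_n :=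
  adjmx U *m diag_mx (\row_j (d j)%:C) *m U.

Lemma adjmx_unitary_diag n (U : 'M[R[i]]_n) d : adjmx (unitary_diag U d) = unitary_diag U d.
Proof.
rewrite /unitary_diag !adjmxM adjmxK adjmx_diag mulmxA.
by congr (_ *m diag_mx _ *m _); apply/rowP => j; rewrite !mxE conjC_real_complex.
Qed.

Lemma eq_unitary_diag n (U : 'M[R[i]]_n) d1 d2 :
  d1 =1 d2 -> unitary_diag U d1 = unitary_diag U d2.
Proof. by move=> /funext ->. Qed.

Lemma unitary_diag1 n (U : 'M[R[i]]_n) : adjmx U *m U = 1%:M ->
  unitary_diag U (fun=> 1) = 1%:M.
Proof.
move=> UU; rewrite /unitary_diag (_ : diag_mx _ = 1%:M) ?mulmx1 //.
by apply/matrixP => a b; rewrite !mxE.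
Qed.

Lemma mul_unitary_diag n (U : 'M[R[i]]_n) d1 d2 : U *m adjmx U = 1%:M ->
  unitary_diag U d1 *m unitary_diag U d2 = unitary_diag U (fun j => d1 j * d2 j).
Proof.
move=> UU; rewrite /unitary_diag !mulmxA -[_ *m _ *m adjmx U]mulmxA UU mulmx1.
rewrite -[_ *m diag_mx _ *m diag_mx _]mulmxA mulmx_diag.
by congr (_ *m diag_mx _ *m _); apply/rowP => j; rewrite !mxE rmorphM.
Qed.

Lemma mxtrace_unitary_diag n (U : 'M[R[i]]_n) d : U *m adjmx U = 1%:M ->
  \tr (unitary_diag U d) = (\sum_j d j)%:C.
Proof.
move=> UU; rewrite /unitary_diag mxtrace_mulC mulmxA UU mul1mx mxtrace_diag rmorph_sum.
by apply: eq_bigr => j _; rewrite mxE.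
Qed.

Lemma row_unitary_diag n (U : 'M[R[i]]_n) d j : U *m adjmx U = 1%:M ->
  row j U *m unitary_diag U d = (d j)%:C *: row j U.
Proof.
move=> UU; rewrite /unitary_diag !mulmxA -row_mul UU row1 -rowE -row_mul mul_diag_mx.
by apply/rowP => k; rewrite !mxE.
Qed.

Lemma qform_unitary_diag n (t : 'rV[R[i]]_n) (U : 'M[R[i]]_n) d :
  qform t (unitary_diag U d) = (\sum_i d i * sqnorm ((t *m adjmx U) 0 i))%:C.
Proof.
rewrite /qform /unitary_diag !mulmxA -(mulmxA _ U) -{2}(adjmxK U) -adjmxM.
set w := t *m adjmx U; rewrite mxE rmorph_sum; apply: eq_bigr => i _.
by rewrite mul_mx_diag [w]lock !mxE -lock mulrAC mul_conjC_sqnorm mulrC rmorphM.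
Qed.

Lemma qform_row_unitary_diag n (U : 'M[R[i]]_n) d j : U *m adjmx U = 1%:M ->
  qform (row j U) (unitary_diag U d) = (d j)%:C.
Proof.
move=> UU; rewrite /qform row_unitary_diag // -scalemxAl mxE.
have -> : (row j U *m adjmx (row j U)) 0 0 = (U *m adjmx U) j j.
  by rewrite !mxE; apply: eq_bigr => k _; rewrite !mxE.
by rewrite UU mxE eqxx mulr1.
Qed.

End UnitaryDiag.

Section Spectral.
Context {R : realType}.

Definition eigval n (M : 'M[R[i]]_n) (j : 'I_n) : R := complex.Re (spectral_diag M 0 j).

Lemma spectralmx_unitary n (M : 'M[R[i]]_n) (U := spectralmx M) :
  U *m adjmx U = 1%:M /\ adjmx U *m U = 1%:M.
Proof.
have uU := spectral_unitarymx M; rewrite adjmxE -invmx_unitary //.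
by split; [apply: mulmxV | apply: mulVmx]; apply: unitarymx_unit.
Qed.

Lemma mxfunE n (f : R -> R) (M : 'M[R[i]]_n) :
  mxfun f M = unitary_diag (spectralmx M) (fun j => f (eigval M j)).
Proof.
rewrite /mxfun /unitary_diag adjmxE -invmx_unitary ?spectral_unitarymx //.
by congr (_ *m diag_mx _ *m _); apply/rowP => j; rewrite !mxE.
Qed.

Lemma hermitian_unitary_diag n (M : 'M[R[i]]_n) : M = adjmx M ->
  M = unitary_diag (spectralmx M) (eigval M).
Proof.
move=> MM; have Mherm : M \is hermsymmx.
  by apply/is_hermitianmxP; rewrite expr0 scale1r -adjmxE.
rewrite /unitary_diag adjmxE -invmx_unitary ?spectral_unitarymx //.
rewrite {1}(orthomx_spectralP (hermitian_normalmx Mherm)).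
congr (_ *m diag_mx _ *m _); apply/rowP => j; rewrite mxE /eigval RRe_real //.
by move/mxOverP: (hermitian_spectral_diag_real Mherm); apply.
Qed.

Lemma eigval_qform n (M : 'M[R[i]]_n) j : M = adjmx M ->
  (eigval M j)%:C = qform (row j (spectralmx M)) M.
Proof.
move=> MM; rewrite {3}(hermitian_unitary_diag MM) qform_row_unitary_diag //.
exact: (spectralmx_unitary M).1.
Qed.

Lemma psd_qform_ge0 n (M : 'M[R[i]]_n) t : psd M -> 0 <= qform t M.
Proof. by case=> _; apply. Qed.

Lemma psd_qform_real n (M : 'M[R[i]]_n) t : psd M -> qform t M = (complex.Re (qform t M))%:C.
Proof. by move=> /(psd_qform_ge0 t)/ge0_realC. Qed.

Lemma psd_qform_Re_ge0 n (M : 'M[R[i]]_n) t : psd M -> 0 <= complex.Re (qform t M).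
Proof. by move=> /(psd_qform_ge0 t); case: (qform t M) => a b; rewrite lecE => /andP[]. Qed.

Lemma psd_eigval_ge0 n (M : 'M[R[i]]_n) j : psd M -> 0 <= eigval M j.
Proof. by move=> Mpsd; rewrite -ler0c eigval_qform ?psd_qform_ge0 //; case: Mpsd. Qed.

Lemma psd_unitary_diag n (U : 'M[R[i]]_n) d : (forall j, 0 <= d j) -> psd (unitary_diag U d).
Proof.
move=> d0; split; first by rewrite adjmx_unitary_diag.
move=> v; rewrite -/(qform v _) qform_unitary_diag ler0c sumr_ge0 // => i _.
by rewrite mulr_ge0 ?sqnorm_ge0.
Qed.

Lemma psd_mulmx_adj m n (M : 'M[R[i]]_n) (B : 'M[R[i]]_(m, n)) :
  psd M -> psd (B *m M *m adjmx B).
Proof.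
case=> MM Mge0; split; first by rewrite !adjmxM adjmxK -MM mulmxA.
by move=> v; rewrite !mulmxA -(mulmxA _ (adjmx B)) -adjmxM; apply: Mge0.
Qed.

Lemma psd0 n : psd (0 : 'M[R[i]]_n).
Proof. by split=> [|v]; rewrite ?adjmx0 // mulmx0 mul0mx mxE. Qed.

Lemma psd1 n : psd (1%:M : 'M[R[i]]_n).
Proof.
split=> [|v]; first by rewrite adjmx1.
rewrite mulmx1 mxE sumr_ge0 // => k _.
by rewrite !mxE mul_conjC_sqnorm ler0c sqnorm_ge0.
Qed.

Lemma psdD n (M N : 'M[R[i]]_n) : psd M -> psd N -> psd (M + N).
Proof.
case=> MM Mge0 [NN Nge0]; split; first by rewrite adjmxD -MM -NN.
by move=> v; rewrite mulmxDr mulmxDl mxE addr_ge0.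
Qed.

Lemma psdZ n (M : 'M[R[i]]_n) (c : R) : 0 <= c -> psd M -> psd (c%:C *: M).
Proof.
move=> c0 [MM Mge0]; split; first by rewrite adjmxZ -MM conjC_real_complex.
by move=> v; rewrite -scalemxAr -scalemxAl mxE mulr_ge0 // ler0c.
Qed.

Lemma psd_sum n (I : finType) (P : pred I) (F : I -> 'M[R[i]]_n) :
  (forall i, P i -> psd (F i)) -> psd (\sum_(i | P i) F i).
Proof. by move=> Fpsd; elim/big_ind: _ => //; [apply: psd0 | apply: psdD]. Qed.

Lemma mxpowE n (M : 'M[R[i]]_n) s :
  mxpow M s = unitary_diag (spectralmx M) (fun j => ppowR s (eigval M j)).
Proof. exact: mxfunE. Qed.

Lemma adjmx_mxpow n (M : 'M[R[i]]_n) s : adjmx (mxpow M s) = mxpow M s.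
Proof. by rewrite mxpowE adjmx_unitary_diag. Qed.

Lemma psd_mxpow n (M : 'M[R[i]]_n) s : psd (mxpow M s).
Proof. by rewrite mxpowE; apply: psd_unitary_diag => j; apply: ppowR_ge0. Qed.

Lemma mxpowD n (M : 'M[R[i]]_n) s t : mxpow M s *m mxpow M t = mxpow M (s + t).
Proof.
rewrite !mxpowE mul_unitary_diag; last exact: (spectralmx_unitary M).1.
by apply: eq_unitary_diag => j; apply: ppowRD.
Qed.

Lemma psd_mxpow1 n (M : 'M[R[i]]_n) : psd M -> mxpow M 1 = M.
Proof.
move=> Mpsd; rewrite mxpowE [RHS](hermitian_unitary_diag Mpsd.1).
apply: eq_unitary_diag => j; rewrite /ppowR; case: leP => [|_].
  by move=> le0; apply/esym/le_anti; rewrite le0 psd_eigval_ge0.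
by rewrite powRr1 // psd_eigval_ge0.
Qed.

Lemma psd_sqrt_mul n (M : 'M[R[i]]_n) : psd M -> mxpow M 2^-1 *m mxpow M 2^-1 = M.
Proof. by move=> M_psd; rewrite mxpowD (_ : 2^-1 + 2^-1 = 1) ?psd_mxpow1 //; field. Qed.

Lemma psd_cauchy_schwarz n (M : 'M[R[i]]_n) (z y : 'rV[R[i]]_n) : psd M ->
  sqnorm ((z *m M *m adjmx y) 0 0) <= complex.Re (qform z M) * complex.Re (qform y M).
Proof.
move=> Mpsd; set r := mxpow M 2^-1.
have rr : r *m r = M by apply: psd_sqrt_mul.
have factor a b : a *m M *m adjmx b = (a *m r) *m adjmx (b *m r).
  by rewrite adjmxM adjmx_mxpow -/r mulmxA -(mulmxA a r r) rr.
have CS : `|((z *m r) *m adjmx (y *m r)) 0 0| ^+ 2 <=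
    ((z *m r) *m adjmx (z *m r)) 0 0 * ((y *m r) *m adjmx (y *m r)) 0 0.
  by rewrite !adjmxE -!dotmxE; apply: (CauchySchwarz (@dotmx _ n) _ _).1.
move: CS; rewrite -!factor normCK -/(qform z M) -/(qform y M) mul_conjC_sqnorm.
by rewrite (psd_qform_real z Mpsd) (psd_qform_real y Mpsd) -rmorphM lecR.
Qed.

End Spectral.

Section SandwichedTrace.
Context {R : realType}.

Lemma loewner_qform_le n (sig rho : 'M[R[i]]_n) (c : R) t :
  psd sig -> psd rho -> psd (c%:C *: sig - rho) ->
  complex.Re (qform t rho) <= c * complex.Re (qform t sig).
Proof.
move=> sig_psd rho_psd /(psd_qform_ge0 t); rewrite qformBl.
rewrite (psd_qform_real t sig_psd) (psd_qform_real t rho_psd).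
by rewrite -rmorphM -rmorphB ler0c subr_ge0.
Qed.

Lemma qform_pinv_le n (sig rho P : 'M[R[i]]_n) (c : R) (y : 'rV[R[i]]_n) :
  0 < c -> psd sig -> psd rho -> psd (c%:C *: sig - rho) ->
  psd P -> P *m sig *m P = P ->
  complex.Re (qform (y *m rho) P) <= c * complex.Re (qform y rho).
Proof.
move=> c_gt0 sig_psd rho_psd le_rho P_psd PsigP; set t := y *m rho.
set L := complex.Re (qform t P); set z := t *m P.
have L_ge0 : 0 <= L by apply: psd_qform_Re_ge0.
have zrho : (z *m rho *m adjmx y) 0 0 = qform t P.
  by rewrite /qform /z /t adjmxM -rho_psd.1 !mulmxA.
have zsig : qform z sig = qform t P.
  by rewrite /qform /z adjmxM -P_psd.1 !mulmxA -(mulmxA t P sig) -(mulmxA t _ P) PsigP.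
have zrho_le : complex.Re (qform z rho) <= c * L.
  by rewrite /L -zsig; apply: loewner_qform_le.
have CS_le := ler_wpM2r (psd_qform_Re_ge0 y rho_psd) zrho_le.
have := psd_cauchy_schwarz z y rho_psd; rewrite zrho (psd_qform_real t P_psd) -/L.
rewrite sqnorm_real expr2 => /le_trans/(_ CS_le).
have [-> _|L_neq0] := eqVneq L 0; first by rewrite mulr_ge0 ?psd_qform_Re_ge0 // ltW.
by rewrite [c * L]mulrC -mulrA ler_pM2l // lt0r L_neq0.
Qed.

Lemma mxpow_pinvK n (sig : 'M[R[i]]_n) :
  psd sig -> mxpow sig (-1) *m sig *m mxpow sig (-1) = mxpow sig (-1).
Proof. by move=> sig_psd; rewrite -{2}(psd_mxpow1 sig_psd) !mxpowD; congr mxpow; lra. Qed.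

Lemma qform_mxpow n (M : 'M[R[i]]_n) s t :
  qform t (mxpow M s) =
  (\sum_i ppowR s (eigval M i) * sqnorm ((t *m adjmx (spectralmx M)) 0 i))%:C.
Proof. by rewrite mxpowE qform_unitary_diag. Qed.

Lemma qform_eigvec n (M : 'M[R[i]]_n) j (p := row j (spectralmx M)) :
  M = adjmx M -> qform p M = (eigval M j)%:C /\ qform p (M *m M) = (eigval M j ^+ 2)%:C.
Proof.
move=> MH; have [UU _] := spectralmx_unitary M; split; first by rewrite eigval_qform.
have -> : M *m M = unitary_diag (spectralmx M) (fun i => eigval M i * eigval M i).
  by rewrite -mul_unitary_diag // -hermitian_unitary_diag.
by rewrite qform_row_unitary_diag // expr2.
Qed.

Lemma psd_mxtrace_ge0 n (M : 'M[R[i]]_n) : psd M -> 0 <= \tr M.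
Proof.
move=> M_psd; apply: sumr_ge0 => k _.
by have := psd_qform_ge0 (row k 1%:M) M_psd; rewrite -mxdiag_qform adjmx1 mul1mx mulmx1.
Qed.

Lemma partial_isometry_mxtrace_le m n (V : 'M[R[i]]_(m, n)) (rho : 'M[R[i]]_n) :
  psd rho -> V *m adjmx V *m V = V ->
  complex.Re (\tr (V *m rho *m adjmx V)) <= complex.Re (\tr rho).
Proof.
move=> rho_psd VVV; set P := adjmx V *m V; set B := 1%:M - P.
have PH : adjmx P = P by rewrite adjmxM adjmxK.
have PP : P *m P = P by rewrite /P !mulmxA -!(mulmxA (adjmx V)) VVV.
have BH : adjmx B = B by rewrite adjmxB adjmx1 PH.
have BB : B *m B = B by rewrite mulmxBl !mulmxBr !mulmx1 mul1mx PP subrr subr0.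
have trV : \tr (V *m rho *m adjmx V) = \tr (rho *m P).
  by rewrite -mulmxA mxtrace_mulC mulmxA.
have trB : \tr (B *m rho *m adjmx B) = \tr (rho *m B).
  by rewrite BH -mulmxA mxtrace_mulC -mulmxA BB.
have trVB : \tr rho = \tr (V *m rho *m adjmx V) + \tr (B *m rho *m adjmx B).
  by rewrite trV trB -mxtraceD -mulmxDr addrC subrK mulmx1.
have : \tr (V *m rho *m adjmx V) <= \tr rho.
  by rewrite [leRHS]trVB lerDl; apply/psd_mxtrace_ge0/psd_mulmx_adj.
by rewrite lecE => /andP[].
Qed.

Lemma sum_eigval_qform_le n (S rho : 'M[R[i]]_n) : adjmx S = S -> psd rho ->
  \sum_j ppowR (-1) (eigval (S *m rho *m S) j) *
      complex.Re (qform (row j (spectralmx (S *m rho *m S)) *m S *m rho) 1%:M)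
  <= complex.Re (\tr rho).
Proof.
move=> SH rho_psd; have X_psd : psd (S *m rho *m S).
  by have := psd_mulmx_adj S rho_psd; rewrite SH.
set X := S *m rho *m S; set P := spectralmx X; set e := eigval X.
have [UP U'P] := spectralmx_unitary X.
have DXD : mxpow X (- 2^-1) *m X *m mxpow X (- 2^-1) = mxpow X 0.
  have X1 : mxpow X 1 = X := psd_mxpow1 X_psd.
  by rewrite -{2}X1 !mxpowD; congr mxpow; field.
have X0D : mxpow X 0 *m mxpow X (- 2^-1) = mxpow X (- 2^-1) by rewrite mxpowD add0r.
have rowPD j : row j (P *m mxpow X (- 2^-1)) = (ppowR (- 2^-1) (e j))%:C *: row j P.
  by rewrite row_mul mxpowE row_unitary_diag.
move: DXD X0D rowPD (adjmx_mxpow X (- 2^-1)) (adjmx_mxpow rho 2^-1) (psd_sqrt_mul rho_psd).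
set D := mxpow X (- 2^-1); set Z := mxpow X 0; set r := mxpow rho 2^-1.
clearbody D Z r => DXD X0D rowPD DH rH rr.
set V := P *m D *m S *m r.
have VVV : V *m adjmx V *m V = V.
  have VV : V *m adjmx V = P *m (D *m X *m D) *m adjmx P.
    by rewrite /V /X -rr !adjmxM DH SH rH !mulmxA.
  by rewrite VV DXD /V !mulmxA -(mulmxA _ (adjmx P)) U'P mulmx1 -(mulmxA P) X0D.
have diagV j : (V *m rho *m adjmx V) j j =
    (ppowR (-1) (e j) * complex.Re (qform (row j P *m S *m rho) 1%:M))%:C.
  have rsr : qform (row j P *m S *m r) rho = qform (row j P *m S *m rho) 1%:M.
    by rewrite /qform mulmx1 !adjmxM rH -rho_psd.1 -rr !mulmxA.
  rewrite mxdiag_qform /V !row_mul -row_mul rowPD -!scalemxAl qformZ.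
  rewrite conjC_real_complex rsr
 (psd_qform_real _ (psd1 n)) -!rmorphM ppowRD.
  by rewrite (_ : - 2^-1 - 2^-1 = -1) //; field.
apply: le_trans (partial_isometry_mxtrace_le rho_psd VVV).
by rewrite /mxtrace (eq_bigr _ (fun j _ => diagV j)) -rmorph_sum.
Qed.

Section EigenvalueBound.
Variables (n : nat) (sig rho : 'M[R[i]]_n) (c al : R).
Hypotheses (al_gt1 : 1 < al) (c_gt0 : 0 < c).
Hypotheses (sig_psd : psd sig) (rho_psd : psd rho) (rho_le : psd (c%:C *: sig - rho)).
Local Notation S := (mxpow sig ((1 - al) / (2 * al))).
Local Notation X := (S *m rho *m S).

Lemma psd_sandwich : psd X.
Proof. by have := psd_mulmx_adj S rho_psd; rewrite adjmx_mxpow. Qed.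

Lemma sandwiched_eigval_le j :
  ppowR al (eigval X j) <= c `^ (al - 1) *
    (ppowR (-1) (eigval X j) * complex.Re (qform (row j (spectralmx X) *m S *m rho) 1%:M)).
Proof.
have SS : S *m S = mxpow sig (al^-1 - 1).
  by rewrite mxpowD; congr mxpow; field; rewrite gt_eqF // (lt_trans ltr01).
move: SS (adjmx_mxpow sig ((1 - al) / (2 * al))) psd_sandwich.
set S' := mxpow sig _; clearbody S' => SS SH X_psd.
set e := eigval _ j; set p := row j _; set t := p *m S' *m rho.
set Q := spectralmx sig; pose a i := sqnorm ((t *m adjmx Q) 0 i).
have [UQ U'Q] := spectralmx_unitary sig.
have sum_a : complex.Re (qform t 1%:M) = \sum_i a i.
  by rewrite -(unitary_diag1 U'Q) qform_unitary_diag; under eq_bigr do rewrite mul1r.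
have [pX pXX] := qform_eigvec j X_psd.1.
have [e_le0|e_gt0] := leP e 0.
  rewrite /ppowR e_le0 sum_a mulr_ge0 ?powR_ge0 ?mulr_ge0 ?ppowR_ge0 //.
  by apply: sumr_ge0 => i _; apply: sqnorm_ge0.
rewrite /ppowR (lt_geF e_gt0) powRN (powRr1 (ltW e_gt0)) sum_a.
have lam_ge0 i : 0 <= eigval sig i := psd_eigval_ge0 i sig_psd.
apply: (powR_le_ppowR_sum al_gt1 e_gt0 lam_ge0 (fun i => sqnorm_ge0 _)).
  apply: complexI; rewrite -pXX -qform_mxpow -SS /qform /t !adjmxM SH -rho_psd.1.
  by rewrite !mulmxA.
have pSrho : qform (p *m S') rho = qform p (S' *m rho *m S').
  by rewrite /qform adjmxM SH !mulmxA.
have := qform_pinv_le (p *m S') c_gt0 sig_psd rho_psd rho_le (psd_mxpow sig (-1))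
  (mxpow_pinvK sig_psd).
by rewrite qform_mxpow pSrho pX.
Qed.

Lemma sandwiched_trace_le :
  complex.Re (\tr (mxpow X al)) <= c `^ (al - 1) * complex.Re (\tr rho).
Proof.
rewrite mxpowE mxtrace_unitary_diag; last exact: (spectralmx_unitary _).1.
apply: le_trans (ler_wpM2l (powR_ge0 _ _) (sum_eigval_qform_le (adjmx_mxpow _ _) rho_psd)).
by rewrite mulr_sumr; apply: ler_sum => j _; apply: sandwiched_eigval_le.
Qed.

End EigenvalueBound.

End SandwichedTrace.

Section Support.
Context {R : realType}.

Lemma psd_qform_eq0 n (M : 'M[R[i]]_n) v :
  psd M -> complex.Re (qform v M) = 0 -> v *m M = 0.
Proof.
move=> M_psd qv0; apply/rowP => a; rewrite [RHS]mxE.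
have := psd_cauchy_schwarz v (delta_mx 0 a) M_psd; rewrite qv0 mul0r.
have -> : adjmx (delta_mx 0 a) = delta_mx a 0 :> 'M[R[i]]_(n, 1).
  by apply/matrixP => i j; rewrite !mxE; case: eqP; case: eqP; rewrite ?rmorph0 ?rmorph1.
by rewrite -colE mxE => sq_le0; apply/sqnorm_eq0/le_anti; rewrite sq_le0 sqnorm_ge0.
Qed.

Lemma loewner_supp_sub n (sig rho : 'M[R[i]]_n) (c : R) :
  0 < c -> psd sig -> psd rho -> psd (c%:C *: sig - rho) -> supp_sub rho sig.
Proof.
move=> c_gt0 sig_psd rho_psd rho_le; set Q := spectralmx sig.
have [UQ U'Q] := spectralmx_unitary sig.
have kerQ i : eigval sig i <= 0 -> row i Q *m rho = 0.
  move=> sig_i_le0; apply: psd_qform_eq0 => //; apply/le_anti.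
  rewrite psd_qform_Re_ge0 // andbT (le_trans (loewner_qform_le _ sig_psd rho_psd rho_le)) //.
  by rewrite -eigval_qform ?mulr_ge0_le0 // ?ltW //; apply: sig_psd.1.
have Pi_rho : mxpow sig 0 *m rho = rho.
  rewrite mxpowE /unitary_diag -!mulmxA -/Q.
  have -> : diag_mx (\row_j (ppowR 0 (eigval sig j))%:C) *m (Q *m rho) = Q *m rho.
    apply/matrixP => i k; rewrite mul_diag_mx mxE [X in X * _]mxE /ppowR.
    case: leP => [/kerQ/rowP/(_ k)|_]; last by rewrite powRr0 mul1r.
    by rewrite -row_mul [LHS]mxE [RHS]mxE => ->; rewrite mulr0.
  by rewrite mulmxA U'Q mul1mx.
have rho_Pi : rho *m mxpow sig 0 = rho.
  by rewrite -[LHS]adjmxK adjmxM adjmx_mxpow -rho_psd.1 Pi_rho -rho_psd.1.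
rewrite /supp_sub -rho_Pi -(addNr 1) -mxpowD psd_mxpow1 // mulmxA; exact: submxMl.
Qed.

End Support.

Section ClassicalRegister.
Context {R : realType} {nB nE : nat}.
Local Notation idx := mxtens.mxtens_index.

Definition blk_emb (b : 'I_nB) : 'M[R[i]]_(nB * nE, nE) := \matrix_(k, i) (k == idx (b, i))%:R.

Definition blk (b : 'I_nB) (M : 'M[R[i]]_(nB * nE)) : 'M[R[i]]_nE :=
  \matrix_(i, j) M (idx (b, i)) (idx (b, j)).

Lemma eq_mxtens_index (b1 b : 'I_nB) (i1 i : 'I_nE) :
  (idx (b1, i1) == idx (b, i)) = (b1 == b) && (i1 == i).
Proof. by rewrite (inj_eq (can_inj (@mxtens.mxtens_indexK _ _))) xpair_eqE. Qed.

Lemma blkE b (M : 'M[R[i]]_(nB * nE)) : blk b M = adjmx (blk_emb b) *m M *m blk_emb b.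
Proof.
apply/matrixP => i j; rewrite !mxE (bigD1 (idx (b, j))) //= big1 => [|l lj]; last first.
  by rewrite !mxE (negbTE lj) mulr0.
rewrite !mxE eqxx mulr1 addr0 (bigD1 (idx (b, i))) //= big1 => [|k ki]; last first.
  by rewrite !mxE (negbTE ki) rmorph0 mul0r.
by rewrite !mxE eqxx rmorph1 mul1r addr0.
Qed.

Lemma tens_deltaE (b : 'I_nB) (X : 'M[R[i]]_nE) :
  tens (delta_mx b b) X = blk_emb b *m X *m adjmx (blk_emb b).
Proof.
apply/matrixP => k l.
case: (mxtens.mxtens_indexP k) => b1 i1; case: (mxtens.mxtens_indexP l) => b2 i2.
rewrite /tens mxtens.tensmxE !mxE.
have [->|nb1] := eqVneq b1 b; last first.
  rewrite /= mul0r big1 // => j _.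
  by rewrite !mxE big1 ?mul0r // => i _; rewrite !mxE eq_mxtens_index (negbTE nb1) mul0r.
have embX j : (blk_emb b *m X) (idx (b, i1)) j = X i1 j.
  rewrite mxE (bigD1 i1) //= big1 => [|i ii].
    by rewrite mxE eq_mxtens_index !eqxx mul1r addr0.
  by rewrite mxE eq_mxtens_index eqxx /= eq_sym (negbTE ii) mul0r.
under eq_bigr do rewrite embX.
have [->|nb2] := eqVneq b2 b.
  rewrite /= mul1r (bigD1 i2) //= big1 => [|j ji].
    by rewrite !mxE eq_mxtens_index !eqxx rmorph1 mulr1 addr0.
  by rewrite !mxE eq_mxtens_index eqxx /= eq_sym (negbTE ji) rmorph0 mulr0.
by rewrite /= mul0r big1 // => j _; rewrite !mxE eq_mxtens_index (negbTE nb2) rmorph0 mulr0.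
Qed.

Lemma psd_tens_delta (b : 'I_nB) (X : 'M[R[i]]_nE) : psd X -> psd (tens (delta_mx b b) X).
Proof. by move=> X_psd; rewrite tens_deltaE; apply: psd_mulmx_adj. Qed.

Lemma psd_blk b (M : 'M[R[i]]_(nB * nE)) : psd M -> psd (blk b M).
Proof. by move=> M_psd; rewrite blkE -{2}(adjmxK (blk_emb b)); apply: psd_mulmx_adj. Qed.

Lemma ptrace1E (M : 'M[R[i]]_(nB * nE)) : ptrace1 M = \sum_b blk b M.
Proof. by apply/matrixP => i j; rewrite summxE !mxE; apply: eq_bigr => b _; rewrite mxE. Qed.

Lemma tens_sumr m (A : 'M[R[i]]_m) (I : finType) (X : I -> 'M[R[i]]_nE) :
  tens A (\sum_i X i) = \sum_i tens A (X i).
Proof.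
apply/matrixP => k l; rewrite /tens summxE !mxE summxE mulr_sumr.
by apply: eq_bigr => i _; rewrite !mxE.
Qed.

Lemma tens_suml m (I : finType) (A : I -> 'M[R[i]]_m) (X : 'M[R[i]]_nE) :
  tens (\sum_i A i) X = \sum_i tens (A i) X.
Proof.
apply/matrixP => k l; rewrite /tens summxE !mxE summxE mulr_suml.
by apply: eq_bigr => i _; rewrite !mxE.
Qed.

Lemma tensZr m (A : 'M[R[i]]_m) (a : R[i]) (X : 'M[R[i]]_nE) :
  tens A (a *: X) = a *: tens A X.
Proof. by apply/matrixP => k l; rewrite /tens !mxE mulrCA. Qed.

Lemma tens1E (X : 'M[R[i]]_nE) : tens (1%:M : 'M[R[i]]_nB) X = \sum_b tens (delta_mx b b) X.
Proof. by rewrite (@mx1_sum_delta _ nB) tens_suml. Qed.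

Lemma psd_tens1_ptrace (M : 'M[R[i]]_(nB * nE)) :
  psd M -> psd (tens (1%:M : 'M[R[i]]_nB) (ptrace1 M)).
Proof.
move=> M_psd; rewrite tens1E; apply: psd_sum => b' _.
by rewrite ptrace1E tens_sumr; apply: psd_sum => b _; apply/psd_tens_delta/psd_blk.
Qed.

Lemma blk_classical (om : 'I_nB -> 'M[R[i]]_nE) b :
  blk b (\sum_(b' < nB) tens (delta_mx b' b') (om b')) = om b.
Proof.
apply/matrixP => i j; rewrite !mxE summxE (bigD1 b) //= big1 => [|b' nb].
  by rewrite /tens mxtens.tensmxE !mxE eqxx mul1r addr0.
by rewrite /tens mxtens.tensmxE !mxE eq_sym (negbTE nb) mul0r.
Qed.

(* [I_B (x) tr_B M - M] is the sum of the blocks [|b'><b'| (x) om_b] with [b != b'] *)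
Lemma classical_le_tens1_ptrace (M : 'M[R[i]]_(nB * nE)) :
  psd M -> classical_B M -> psd (tens (1%:M : 'M[R[i]]_nB) (ptrace1 M) - M).
Proof.
move=> M_psd [om ME].
have om_psd b : psd (om b) by rewrite -(blk_classical om b) -ME; apply: psd_blk.
have -> : ptrace1 M = \sum_b om b.
  by rewrite ptrace1E; apply: eq_bigr => b _; rewrite ME blk_classical.
rewrite tens1E ME -sumrB.
rewrite (eq_bigr (fun b' => \sum_(b | b != b') tens (delta_mx b' b') (om b))) => [|b' _].
  by apply: psd_sum => b' _; apply: psd_sum => b _; apply: psd_tens_delta.
by rewrite tens_sumr (bigD1 b') //= addrAC subrr add0r.
Qed.

End ClassicalRegister.

Section Divergences.
Context {R : realType}.

Lemma powR2_log2 (x : R) : 0 < x -> 2 `^ log2 x = x.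
Proof.
move=> x_gt0; have ln2_gt0 : 0 < ln (2 : R) by apply: ln_gt0; lra.
rewrite /powR (_ : 2 == 0 = false); last by apply/negbTE; lra.
by rewrite /log2 divfK ?gt_eqF // lnK // posrE.
Qed.

Lemma powRV (x r : R) : 0 < x -> x^-1 `^ r = x `^ (- r).
Proof. by move=> x_gt0; rewrite -powR_inv1 ?ltW // -powRrM mulN1r. Qed.

Lemma D_max_le n (rho sig : 'M[R[i]]_n) (l : R) :
  loewner_le rho ((2 `^ l)%:C *: sig) -> (D_max rho sig <= l%:E)%E.
Proof. by move=> le_rho; apply: ereal_inf_lbound; exists l. Qed.

(* [1 <= c] is needed for the junk value [log2 0 = 0] *)
Lemma exp2e_D_alpha_le n (sig rho : 'M[R[i]]_n) (c al : R) :
  1 <= al -> 1 <= c -> psd sig -> density rho -> psd (c%:C *: sig - rho) ->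
  (exp2e ((al - 1)%:E * D_alpha al rho sig) <= (c `^ (al - 1))%:E)%E.
Proof.
move=> al_ge1 c_ge1 sig_psd [rho_psd tr_rho] rho_le; have c_gt0 : 0 < c by lra.
rewrite /D_alpha; case: eqP => [->|al_neq1]; first by rewrite subrr mul0e /= !powRr0.
have al_gt1 : 1 < al by rewrite lt_neqAle eq_sym al_ge1 andbT; apply/eqP.
rewrite /D_sand (loewner_supp_sub c_gt0 sig_psd rho_psd rho_le) /= tr_rho divr1.
rewrite mulrA mulfV ?subr_eq0 ?gt_eqF // mul1r lee_fin.
have := sandwiched_trace_le al_gt1 c_gt0 sig_psd rho_psd rho_le; rewrite tr_rho mulr1.
set q := complex.Re _ => q_le; have [q_gt0|q_le0] := ltP 0 q; first by rewrite powR2_log2.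
have := @ler_powR _ c c_ge1 0 (al - 1); rewrite subr_ge0 powRr0 => /(_ al_ge1).
by rewrite /log2 ln0 // mul0r powRr0.
Qed.

End Divergences.

Section StateOnABE.
Context {R : realType} {A : finType} {nB nE : nat}.
Variables (p : A -> R) (rhoBE : A -> 'M[R[i]]_(nB * nE)).
Hypothesis p_ge0 : forall a, 0 <= p a.
Hypothesis rhoBE_psd : forall a, 0 < p a -> psd (rhoBE a).

Local Notation sigE := (tens (1%:M : 'M[R[i]]_nB) (rhoE p rhoBE)).
Local Notation T a := (tens (1%:M : 'M[R[i]]_nB) (ptrace1 (rhoBE a))).

Lemma tens1_rhoE : sigE = \sum_a (p a)%:C *: T a.
Proof. by rewrite /rhoE tens_sumr; apply: eq_bigr => a _; rewrite tensZr. Qed.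

Lemma psd_scale_tens1_ptrace (k : R) a : 0 <= k -> psd ((k * p a)%:C *: T a).
Proof.
move=> k_ge0; have [->|pa_neq0] := eqVneq (p a) 0.
  by rewrite mulr0 scale0r; apply: psd0.
by apply/psdZ/psd_tens1_ptrace/rhoBE_psd; rewrite ?mulr_ge0 // lt0r pa_neq0 /=.
Qed.

Lemma psd_tens1_rhoE : psd sigE.
Proof.
rewrite tens1_rhoE; apply: psd_sum => a _.
by have := psd_scale_tens1_ptrace a ler01; rewrite mul1r.
Qed.

Lemma rhoBE_le_tens1_rhoE a : 0 < p a -> classical_B (rhoBE a) ->
  psd ((p a)^-1%:C *: sigE - rhoBE a).
Proof.
move=> pa_gt0 cl_a; rewrite tens1_rhoE scaler_sumr.
rewrite (eq_bigr (fun a' => ((p a)^-1 * p a')%:C *: T a')) => [|a' _]; last first.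
  by rewrite scalerA rmorphM.
rewrite (bigD1 a) //= mulVf ?gt_eqF // scale1r addrAC.
apply: psdD; first exact: classical_le_tens1_ptrace (rhoBE_psd pa_gt0) cl_a.
by apply: psd_sum => a' _; apply: psd_scale_tens1_ptrace; rewrite invr_ge0 ltW.
Qed.

End StateOnABE.

Theorem claimC14 (R : realType) (A : finType) (nB nE : nat)
  (p : A -> R) (rhoBE : A -> 'M[R[i]]_(nB * nE)) :
  (forall a, 0 <= p a) -> \sum_(a : A) p a = 1 ->
  (forall a, 0 < p a -> density (rhoBE a) /\ classical_B (rhoBE a)) ->
  forall a, 0 < p a ->
    (forall alpha : R, 1 <= alpha ->
       (exp2e ((alpha - 1)%:E * D_alpha alpha (rhoBE a) (tens 1%:M (rhoE p rhoBE)))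
        <= (p a `^ (1 - alpha))%:E)%E)
    /\ (D_max (rhoBE a) (tens 1%:M (rhoE p rhoBE)) <= (- log2 (p a))%:E)%E.
Proof.
move=> p_ge0 sum_p hyp a pa_gt0; have [rho_density cl_a] := hyp a pa_gt0.
have rhoBE_psd a' : 0 < p a' -> psd (rhoBE a') by move=> /hyp[[]].
have sig_psd := psd_tens1_rhoE p_ge0 rhoBE_psd.
have rho_le := rhoBE_le_tens1_rhoE p_ge0 rhoBE_psd pa_gt0 cl_a.
split=> [al al_ge1|].
  rewrite -[1 - al]opprB -powRV //; apply: exp2e_D_alpha_le => //.
  by rewrite invf_ge1 // -sum_p (bigD1 a) //= lerDl sumr_ge0.
by apply: D_max_le; rewrite powRN powR2_log2.
Qed.
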